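(* Let $(X,d)$ be a compact metric space and $\mathbb{F}=\{f_n:n\in\mathbb{N}\}$ a sequence of continuous surjective self-maps of $X$, and let $k\in\mathbb{N}$. Then $(X,\mathbb{F}_k)$ is equicontinuous if and only if $(X,\mathbb{F})$ is equicontinuous.
   Context: Write $\omega_n=f_n\circ\cdots\circ f_1$ and, for $n>k$, $\omega^k_n=f_n\circ\cdots\circ f_{k+1}$. $\mathbb{F}_k=\{f_n:n\ge k+1\}$ is the truncated family, generating the system with compositions $\omega^k_n$, $n>k$. $(X,\mathbb{F})$ is equicontinuous if for every $\epsilon>0$ there is $\delta>0$ such that $d(x,y)<\delta$ implies $d(\omega_n(x),\omega_n(y))<\epsilon$ for all $n\in\mathbb{N}$ and all $x,y\in X$; $(X,\mathbb{F}_k)$ is equicontinuous if the same holds with $\omega^k_n$, $n>k$, in place of $\omega_n$. *)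

From HB Require Import structures.
From mathcomp Require Import all_boot all_order all_algebra.
From mathcomp Require Import all_classical all_reals all_analysis.
Set Implicit Arguments. Unset Strict Implicit. Unset Printing Implicit Defensive.
Import Order.TTheory GRing.Theory Num.Theory.
Local Open Scope ring_scope.

(* Nonautonomous system: the family F = {f_n : n >= 1} is given by
   f : nat -> X -> X, where only the values f n for n >= 1 matter. *)

(* omega_from f k n = f_n o ... o f_(k+1)  (identity if n <= k).
   omega_n = omega_from f 0 n,  omega^k_n = omega_from f k n for n > k. *)
Fixpoint omega_from {X : Type} (f : nat -> X -> X) (k n : nat) : X -> X :=
  match n with
  | 0 => id
  | n'.+1 => if (k <= n')%N then f n'.+1 \o omega_from f k n' else id
  end.

(* (X, F_k) is equicontinuous: for every eps>0 there is delta>0 such that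
   d(x,y)<delta implies d(omega^k_n x, omega^k_n y) < eps for all n>k and all x,y.
   (X, F) is the case k = 0, with n ranging over n >= 1.) *)
Definition equicontinuous_from {R : realType} {X : metricType R}
  (f : nat -> X -> X) (k : nat) : Prop :=
  forall eps : R, 0 < eps -> exists2 delta : R, 0 < delta &
    forall (n : nat) (x y : X), (k < n)%N -> mdist x y < delta ->
      mdist (omega_from f k n x) (omega_from f k n y) < eps.

From HB Require Import structures.
From mathcomp Require Import all_boot all_order all_algebra.
From mathcomp Require Import all_classical all_reals all_analysis.
From mathcomp Require Import lra.
Import Order.TTheory GRing.Theory Num.Theory.
Local Open Scope ring_scope.
Local Open Scope classical_set_scope.

(* It suffices to compare F_k with F_(k+1), where omega^k_n = omega^(k+1)_n o g
   with g = f_(k+1).  Uniform continuity of g on the compact space transports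
   equicontinuity from F_(k+1) to F_k.  Conversely, omega^k_n p = omega^k_n q
   whenever g p = g q, so by equicontinuity of F_k the orbits of points near p
   and near q stay eps-close; compactness makes this uniform: there is delta
   such that d(g a, g b) < delta already forces the orbits of a and b to stay
   eps-close, and surjectivity of g lets every pair x, y be written g a, g b. *)

Lemma omega_from_le {X : Type} (f : nat -> X -> X) (k n : nat) (x : X) :
  (n <= k)%N -> omega_from f k n x = x.
Proof.
case: n => [//|n] /= lt_nk.
by rewrite ifF //; apply/negbTE; rewrite -ltnNge; exact: leq_trans lt_nk.
Qed.

Lemma omega_fromS {X : Type} (f : nat -> X -> X) (k n : nat) (x : X) :
  (k < n)%N -> omega_from f k n x = omega_from f k.+1 n (f k.+1 x).
Proof.
elim: n => [//|n IHn] lt_kn /=; rewrite ifT //.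
case: (ltngtP k n) => [lt_kn'|lt_nk|<-].
- by rewrite /= IHn // ifT.
- by move: lt_kn; rewrite ltnS leqNgt lt_nk.
- by rewrite /= omega_from_le.
Qed.

Lemma continuous_mdist_ball {R : realType} {X Y : metricType R} {g : X -> Y}
    (p : X) {eps : R} :
  continuous g -> 0 < eps -> exists2 r : R, 0 < r &
    forall a, mdist p a < r -> mdist (g p) (g a) < eps.
Proof.
move=> g_cont eps_gt0.
have [r r_gt0 gr] := (nbhs_ballP _ _).1 (g_cont p _ (nbhsx_ballx (g p) _ eps_gt0)).
by exists r => // a; have := gr a; rewrite /= !ballEmdist.
Qed.

(* By compactness of X * X, pairs violating U with d(h a, h b) -> 0 would
   cluster at a point of the kernel pair of h, near which U holds. *)
Lemma compact_kernel_pair_near {R : realType} {X Y : metricType R}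
    (h : X -> Y) (U : set (X * X)) :
  compact [set: X] -> continuous h ->
  (forall p q, h p = h q -> exists2 r : R, 0 < r &
     forall a b, mdist p a < r -> mdist q b < r -> U (a, b)) ->
  exists2 delta : R, 0 < delta & forall a b, mdist (h a) (h b) < delta -> U (a, b).
Proof.
move=> cX h_cont U_near; apply: contrapT => no_delta.
pose S d := [set ab : X * X | mdist (h ab.1) (h ab.2) < d /\ ~ U ab].
pose F := filter_from [set d : R | 0 < d] S.
have F_proper : ProperFilter F.
  apply: filter_from_proper; last first.
    move=> d d_gt0; apply: contrapT => /set0P/negP/negPn/eqP S0.
    apply: no_delta; exists d => // a b lt_hab; apply: contrapT => notU.
    by have : S d (a, b) by []; rewrite S0.
  apply: filter_from_filter; first by exists 1 => /=.
  move=> d1 d2 d1_gt0 d2_gt0; exists (Num.min d1 d2); first by rewrite /= lt_min d1_gt0 d2_gt0.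
  by move=> ab [+ notU]; rewrite lt_min => /andP[lt1 lt2].
have cXX : compact [set: X * X] by rewrite -setXTT; exact: compact_setX.
have [[p q] [_ clF]] := cXX F F_proper filterT.
have near_pq d r : 0 < d -> 0 < r ->
    exists a b, S d (a, b) /\ mdist p a < r /\ mdist q b < r.
  move=> d_gt0 r_gt0.
  have [[a b] [Sab [/= pa qb]]] := clF (S d) _ (ex_intro2 _ _ d d_gt0 (fun _ => id))
    (nbhsx_ballx (p, q) _ r_gt0).
  by exists a, b; move: pa qb; rewrite !ballEmdist.
have hpq : h p = h q.
  apply: contrapT => /eqP neq_hpq.
  have D_gt0 : 0 < mdist (h p) (h q) by rewrite mdist_gt0.
  have D3_gt0 : 0 < mdist (h p) (h q) / 3 by rewrite divr_gt0.
  have [rp rp_gt0 hp_near] := continuous_mdist_ball p h_cont D3_gt0.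
  have [rq rq_gt0 hq_near] := continuous_mdist_ball q h_cont D3_gt0.
  have r_gt0 : 0 < Num.min rp rq by rewrite lt_min rp_gt0 rq_gt0.
  have [a [b [[/= lt_hab _] [pa qb]]]] := near_pq _ _ D3_gt0 r_gt0.
  move: pa qb; rewrite !lt_min => /andP[/hp_near hpa _] /andP[_ /hq_near hqb].
  have := metric_triangle (h p) (h a) (h q); have := metric_triangle (h a) (h b) (h q).
  rewrite (metric_sym (h b) (h q)); lra.
have [r r_gt0 Ur] := U_near p q hpq.
by have [a [b [[_ notU] [pa qb]]]] := near_pq 1 r ltr01 r_gt0; apply: notU; apply: Ur.
Qed.

Lemma compact_unif_continuous {R : realType} {X Y : metricType R} {g : X -> Y} :
  compact [set: X] -> continuous g ->
  forall eps : R, 0 < eps -> exists2 delta : R, 0 < delta &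
    forall a b : X, mdist a b < delta -> mdist (g a) (g b) < eps.
Proof.
move=> cX g_cont eps eps_gt0.
have eps2_gt0 : 0 < eps / 2 by rewrite divr_gt0.
apply: (compact_kernel_pair_near id
  [set ab | mdist (g ab.1) (g ab.2) < eps] cX (fun _ => cvg_id)) => p _ <-.
have [r r_gt0 gr] := continuous_mdist_ball p g_cont eps2_gt0.
exists r => // a b /gr ga /gr gb.
rewrite /=; have := metric_triangle (g a) (g p) (g b); rewrite (metric_sym (g a) (g p)); lra.
Qed.

Section equicontinuous_shift.
Variables (R : realType) (X : metricType R) (f : nat -> X -> X) (k : nat).
Hypotheses (cX : compact [set: X]) (fk_cont : continuous (f k.+1)).

Lemma equicontinuous_from_pred :
  equicontinuous_from f k.+1 -> equicontinuous_from f k.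
Proof.
move=> eq_fk1 eps eps_gt0.
have [d1 d1_gt0 orbit_d1] := eq_fk1 eps eps_gt0.
have m_gt0 : 0 < Num.min d1 eps by rewrite lt_min d1_gt0 eps_gt0.
have [delta delta_gt0 close_delta] := compact_unif_continuous cX fk_cont _ m_gt0.
exists delta => // n x y lt_kn /close_delta; rewrite lt_min !(omega_fromS f k n) //.
move=> /andP[lt_d1 lt_eps].
have [lt_k1n|le_nk1] := ltnP k.+1 n; first exact: orbit_d1.
by rewrite !omega_from_le.
Qed.

Hypothesis fk_surj : forall y : X, exists x : X, f k.+1 x = y.

Lemma equicontinuous_from_succ :
  equicontinuous_from f k -> equicontinuous_from f k.+1.
Proof.
move=> eq_fk eps eps_gt0.
have eps2_gt0 : 0 < eps / 2 by rewrite divr_gt0.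
have [d0 d0_gt0 orbit_d0] := eq_fk _ eps2_gt0.
pose U := [set ab : X * X | forall n, (k < n)%N ->
  mdist (omega_from f k n ab.1) (omega_from f k n ab.2) < eps].
have [delta delta_gt0 close_delta] : exists2 delta : R, 0 < delta &
    forall a b, mdist (f k.+1 a) (f k.+1 b) < delta -> U (a, b).
  apply: compact_kernel_pair_near => // p q fpq.
  exists d0 => // a b pa qb n lt_kn /=.
  have pq : omega_from f k n p = omega_from f k n q by rewrite !(omega_fromS f k n) ?fpq.
  have orbit_qa := orbit_d0 n _ _ lt_kn pa; rewrite pq in orbit_qa.
  have orbit_qb := orbit_d0 n _ _ lt_kn qb.
  have := metric_triangle (omega_from f k n a) (omega_from f k n q) (omega_from f k n b).
  rewrite (metric_sym (omega_from f k n a) (omega_from f k n q)); lra.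
exists delta => // n x y lt_k1n.
have [a <-] := fk_surj x; have [b <-] := fk_surj y.
move=> /close_delta /(_ n (ltnW lt_k1n)) /=.
by rewrite !(omega_fromS f k n) // ltnW.
Qed.

End equicontinuous_shift.

Theorem mainTheorem2 (R : realType) (X : metricType R) (f : nat -> X -> X)
  (k : nat) :
  compact [set: X] ->
  (forall n : nat, (0 < n)%N -> continuous (f n)) ->
  (forall n : nat, (0 < n)%N -> forall y : X, exists x : X, f n x = y) ->
  (equicontinuous_from f k <-> equicontinuous_from f 0).
Proof.
move=> cX f_cont f_surj; elim: k => [//|k IHk]; rewrite -IHk.
have fk_cont := f_cont k.+1 isT; have fk_surj := f_surj k.+1 isT.
split; [exact: equicontinuous_from_pred | exact: equicontinuous_from_succ].
Qed.
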